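(* Let $q$ be a prime power, $k\ge 1$, $d\ge1$, and write $d=\sigma q^{k-1}-\sum_{i=0}^{k-2}\varepsilon_i q^i$ with $\sigma$ an integer and $0\le \varepsilon_i\le q-1$. Let $C$ be a linear $[n,k,d]_q$ code with $n=g_q(k,d)$. Then for every $1\le r\le k$, \[ d_r(C)=v_r\Bigl(\sigma q^{k-r}-\sum_{i=r}^{k-1}\varepsilon_{i-1}q^{i-r}\Bigr)-\sum_{i=1}^{r-1}\varepsilon_{i-1}v_i, \] and $C$ attains the Griesmer bound for the $r$th generalized Hamming weight, i.e. $n=g_q^{(r)}(k,d_r(C))$.
   Context: $v_j=(q^j-1)/(q-1)$. An $[n,k,d]_q$ code is a $k$-dimensional subspace of $\mathbb{F}_q^n$ with minimum Hamming distance $d$. $g_q(k,d)=\sum_{i=0}^{k-1}\lceil d/q^i\rceil$ (the Griesmer bound). For a subcode $C'\le C$, its support is the set of coordinates in which some codeword of $C'$ is nonzero; the $r$th generalized Hamming weight $d_r(C)$ is the minimum support size of an $r$-dimensional subcode of $C$. For $1\le r\le k$, $g_q^{(r)}(k,d)=d+\sum_{i=1}^{k-r}\lceil d/(q^iv_r)\rceil$. *)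

From HB Require Import structures.
From mathcomp Require Import all_boot all_order all_algebra all_field.
Set Implicit Arguments. Unset Strict Implicit. Unset Printing Implicit Defensive.
Import Order.TTheory GRing.Theory Num.Theory.

Local Open Scope ring_scope.

(* Linear codes of length n over a finite field F are subspaces
   C : {vspace 'rV[F]_n}; q = #|F|. *)

Definition wt (F : finFieldType) (n : nat) (v : 'rV[F]_n) : nat :=
  #|[set j : 'I_n | v 0 j != 0]|.

Definition supp (F : finFieldType) (n : nat) (D : {vspace 'rV[F]_n}) : {set 'I_n} :=
  [set j : 'I_n | [exists v : 'rV[F]_n, (v \in D) && (v 0 j != 0)]].

Definition is_min_dist (F : finFieldType) (n : nat) (C : {vspace 'rV[F]_n}) (d : nat) : Prop :=
  (exists2 c : 'rV[F]_n, (c \in C) && (c != 0) & wt c = d) /\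
  (forall c : 'rV[F]_n, c \in C -> c != 0 -> (d <= wt c)%N).

Definition is_ghw (F : finFieldType) (n : nat) (C : {vspace 'rV[F]_n}) (r w : nat) : Prop :=
  (exists D : {vspace 'rV[F]_n}, [/\ (D <= C)%VS, \dim D = r & #|supp D| = w]) /\
  (forall D : {vspace 'rV[F]_n}, (D <= C)%VS -> \dim D = r -> (w <= #|supp D|)%N).

Definition vq (q j : nat) : nat := ((q ^ j - 1) %/ (q - 1))%N.

Definition ceil_div (a b : nat) : nat := ((a + b - 1) %/ b)%N.

Definition griesmer (q k d : nat) : nat := (\sum_(i < k) ceil_div d (q ^ i))%N.

Definition griesmer_r (q k r d : nat) : nat :=
  (d + \sum_(1 <= i < (k - r).+1) ceil_div d (q ^ i * vq q r))%N.

(* Zeroing the support of a minimum-weight codeword c maps C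
   onto a residual code of dimension k - 1; averaging weights over the coset
   x + F c shows that its nonzero words weigh at least wt(c) / q, and
   |supp C| = wt(c) + |supp Res|.  By induction, a code of minimum distance at
   least d has support at least g_q(k, d); as r-dimensional subcodes keep
   minimum distance d, this gives d_r(C) >= g_q(r, d).  When C meets the
   Griesmer bound, wt(c) = d and the residual code meets it as well, so the
   induction runs backwards: a small r-dimensional subcode of the residual code
   lifts to an (r+1)-dimensional one of C, whence d_r(C) = g_q(r, d).  The rest
   is arithmetic: ceil(d / q^(r-1)) is read off the q-ary expansion of d, and
   ceil(g_q(r, d) / (q^i v_r)) = ceil(d / q^(r+i-1)) because g_q(r, -) is
   monotone and exact on multiples of q^r. *)

From HB Require Import structures.
From mathcomp Require Import all_boot all_order all_algebra all_field.
From mathcomp Require Import zify ring.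
Import Order.TTheory GRing.Theory Num.Theory.

Set Implicit Arguments. Unset Strict Implicit. Unset Printing Implicit Defensive.

Lemma leq_ceil_divLR a b e : 0 < b -> (ceil_div a b <= e) = (a <= e * b).
Proof. by move=> b_gt0; rewrite /ceil_div -ltnS ltn_divLR // mulSn; apply/idP/idP; lia. Qed.

Lemma ceil_div1 a : ceil_div a 1 = a.
Proof. by rewrite /ceil_div addnK divn1. Qed.

Lemma ceil_div_mull a b : 0 < b -> ceil_div (a * b) b = a.
Proof.
by move=> b_gt0; rewrite /ceil_div -addnBA // divnMDl // divn_small ?addn0 //; lia.
Qed.

Lemma ceil_div_ceil_div a b c : 0 < b -> 0 < c ->
  ceil_div (ceil_div a b) c = ceil_div a (b * c).
Proof.
move=> b_gt0 c_gt0.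
have leE e : (ceil_div (ceil_div a b) c <= e) = (ceil_div a (b * c) <= e).
  by rewrite !leq_ceil_divLR ?muln_gt0 ?b_gt0 // mulnAC mulnA.
by apply/eqP; rewrite eqn_leq leE leqnn -leE leqnn.
Qed.

Lemma leq_ceil_div2r b a1 a2 : a1 <= a2 -> ceil_div a1 b <= ceil_div a2 b.
Proof. by move=> le_a; rewrite leq_div2r // leq_sub2r // leq_add2r. Qed.

Lemma ceil_div_eq a b m : 0 < b -> (m - 1) * b < a -> a <= m * b -> ceil_div a b = m.
Proof.
move=> b_gt0 lt_a le_a; apply/eqP; rewrite eqn_leq leq_ceil_divLR // le_a /=.
case: m lt_a {le_a} => [|m]; first by rewrite mul0n.
by rewrite subn1 /= ltnNge -leq_ceil_divLR // -ltnNge.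
Qed.

Section Griesmer.

Variable q : nat.
Hypothesis q_gt1 : 1 < q.
Let q_gt0 : 0 < q := ltnW q_gt1.
Let expq_gt0 i : 0 < q ^ i. Proof. by rewrite expn_gt0 q_gt0. Qed.

Lemma griesmerS m x : griesmer q m.+1 x = x + griesmer q m (ceil_div x q).
Proof.
rewrite /griesmer big_ord_recl /= expn0 ceil_div1; congr (_ + _).
by apply: eq_bigr => i _; rewrite /bump /= add1n expnS ceil_div_ceil_div.
Qed.

Lemma griesmer_recr m x : griesmer q m.+1 x = griesmer q m x + ceil_div x (q ^ m).
Proof. by rewrite /griesmer big_ord_recr. Qed.

Lemma leq_griesmer m : {homo griesmer q m : x y / x <= y}.
Proof. by move=> x y le_xy; apply: leq_sum => i _; apply: leq_ceil_div2r. Qed.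

Lemma ltn_griesmer m : 0 < m -> {homo griesmer q m : x y / x < y}.
Proof.
case: m => // m _ x y lt_xy; rewrite !griesmerS.
by rewrite -addSn leq_add // leq_griesmer // leq_ceil_div2r // ltnW.
Qed.

Lemma vqE j : vq q j = \sum_(i < j) q ^ i.
Proof. by rewrite /vq subn1 predn_exp subn1 mulKn // -subn1 subn_gt0. Qed.

Lemma vqS j : vq q j.+1 = q * vq q j + 1.
Proof.
rewrite !vqE big_ord_recl /= expn0 big_distrr addnC; congr (_ + _).
by apply: eq_bigr => i _; rewrite /bump /= add1n expnS.
Qed.

Lemma vq_gt0 j : 0 < j -> 0 < vq q j.
Proof. by case: j => // j _; rewrite vqS addn1. Qed.

Lemma griesmer_mulX m x : griesmer q m (x * q ^ m) = x * q * vq q m.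
Proof.
elim: m x => [|m IHm] x; first by rewrite /griesmer big_ord0 vqE big_ord0 muln0.
by rewrite griesmer_recr expnS mulnA IHm ceil_div_mull // vqS; ring.
Qed.

Lemma ceil_div_griesmer r i d : 0 < r -> 0 < d ->
  ceil_div (griesmer q r d) (q ^ i.+1 * vq q r) = ceil_div d (q ^ (r + i)).
Proof.
move=> r_gt0 d_gt0; set A := ceil_div d _.
have d_le : d <= A * q ^ (r + i) by rewrite -leq_ceil_divLR.
have d_gt : (A - 1) * q ^ (r + i) < d.
  rewrite ltnNge -leq_ceil_divLR // -/A.
  by case: A d_le => [|A] d_le; [lia | rewrite subn1 /= -ltnNge].
have griesmerA m : griesmer q r (m * q ^ (r + i)) = m * (q ^ i.+1 * vq q r).
  by rewrite addnC expnD mulnA griesmer_mulX expnSr !mulnA.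
apply: ceil_div_eq; first by rewrite muln_gt0 expq_gt0 vq_gt0.
  by rewrite -griesmerA ltn_griesmer.
by rewrite -griesmerA leq_griesmer.
Qed.

Lemma griesmer_split k r d : 0 < r -> r <= k -> 0 < d ->
  griesmer q k d = griesmer_r q k r (griesmer q r d).
Proof.
move=> r_gt0 rk d_gt0.
have sum_nat m : \sum_(i < m) ceil_div d (q ^ i) = \sum_(0 <= i < m) ceil_div d (q ^ i).
  by rewrite big_mkord.
rewrite /griesmer_r big_add1 /= /griesmer !sum_nat (@big_cat_nat _ _ _ r 0 k) //=.
congr (_ + _); rewrite -{1}(add0n r) big_addn; apply: eq_bigr => i _.
by rewrite -sum_nat -/(griesmer q r d) ceil_div_griesmer // addnC.
Qed.

End Griesmer.

Lemma sum_digits_lt q (eps : nat -> nat) j : (forall i, i < j -> eps i < q) ->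
  \sum_(0 <= i < j) eps i * q ^ i < q ^ j.
Proof.
elim: j => [|j IHj] eps_lt; first by rewrite big_geq.
rewrite big_nat_recr //= expnS.
have := IHj (fun i lt_ij => eps_lt i (ltnW lt_ij)); have := eps_lt j (ltnSn j).
set Q := q ^ j; set L := \sum_(0 <= i < j) _; nia.
Qed.

Section QaryExpansion.

Local Open Scope ring_scope.

Lemma ceil_div_sub d b a (m : int) : (0 < d)%N -> (a < b)%N ->
  d%:Z = b%:Z * m - a%:Z -> (ceil_div d b)%:Z = m.
Proof.
move=> d_gt0 lt_ab; case: m => m; last by rewrite NegzE; lia.
rewrite -PoszM => d_eq; congr Posz; apply: ceil_div_eq; lia.
Qed.

Variables (q k : nat) (sigma : int) (eps : nat -> nat).

(* The value of ceil(d / q ^ (r - 1)) read off the q-ary expansion of d. *)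
Definition ceil_quot (r : nat) : int :=
  sigma * (q ^ (k - r))%N%:Z - \sum_(r <= i < k) (eps i.-1 * q ^ (i - r))%N%:Z.

Lemma ceil_quotS r : (0 < r)%N -> (r < k)%N ->
  ceil_quot r = q%:Z * ceil_quot r.+1 - (eps r.-1)%:Z.
Proof.
move=> r_gt0 rk; rewrite /ceil_quot big_ltn // subnn expn0 muln1.
have -> : \sum_(r.+1 <= i < k) (eps i.-1 * q ^ (i - r))%N%:Z =
    q%:Z * \sum_(r.+1 <= i < k) (eps i.-1 * q ^ (i - r.+1))%N%:Z.
  rewrite mulr_sumr big_nat_cond [RHS]big_nat_cond.
  apply: eq_bigr => i /andP[/andP[lt_ri _] _].
  by rewrite -(subnSK lt_ri) expnS !PoszM mulrCA.
by rewrite -(subnSK rk) expnS !PoszM; ring.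
Qed.

Lemma ceil_quot_expansion r : (0 < r)%N -> (r <= k)%N ->
  (q ^ r.-1)%N%:Z * ceil_quot r - \sum_(0 <= i < r.-1) (eps i * q ^ i)%N%:Z =
  sigma * (q ^ (k - 1))%N%:Z - \sum_(0 <= i < k.-1) (eps i * q ^ i)%N%:Z.
Proof.
move=> + rk; rewrite -(subKn rk); elim: (k - r)%N => [|t IHt] r_gt0.
  by rewrite subn0 /ceil_quot subnn big_geq // expn0 subr0 mulr1 subn1 mulrC.
rewrite -IHt; last by lia.
have -> : (k - t = (k - t.+1).+1)%N by lia.
rewrite ceil_quotS //; last by lia.
case: (k - t.+1)%N r_gt0 => // s _ /=.
by rewrite big_nat_recr //= expnS !PoszM; ring.
Qed.

Variable d : nat.
Hypothesis q_gt1 : (1 < q)%N.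
Hypothesis d_gt0 : (0 < d)%N.
Hypothesis eps_le : forall i, (i < k.-1)%N -> (eps i <= q - 1)%N.
Hypothesis d_eq :
  d%:Z = sigma * (q ^ (k - 1))%N%:Z - \sum_(0 <= i < k.-1) (eps i * q ^ i)%N%:Z.

Lemma ceil_div_ceil_quot r : (0 < r)%N -> (r <= k)%N ->
  (ceil_div d (q ^ r.-1))%:Z = ceil_quot r.
Proof.
move=> r_gt0 rk; apply: (ceil_div_sub d_gt0 (@sum_digits_lt q eps r.-1 _)).
  by move=> i lt_ir; have := @eps_le i; lia.
by rewrite d_eq -(ceil_quot_expansion r_gt0 rk) (big_morph Posz PoszD (erefl 0%:Z)).
Qed.

Lemma griesmer_ceil_quot r : (r <= k)%N ->
  (griesmer q r d)%:Z =
  (vq q r)%:Z * ceil_quot r - \sum_(1 <= i < r) (eps i.-1 * vq q i)%N%:Z.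
Proof.
elim: r => [|r IHr] lt_rk.
  by rewrite /griesmer big_ord0 vqE // big_ord0 mul0r big_geq.
rewrite griesmer_recr // PoszD (@ceil_div_ceil_quot r.+1) //.
case: r IHr lt_rk => [|r] IHr lt_rk.
  by rewrite /griesmer big_ord0 vqS // vqE // big_ord0 big_geq //; ring.
rewrite IHr 1?ltnW // (ceil_quotS (r := r.+1)) // [in RHS]big_nat_recr //= (vqS q_gt1 r.+1).
by rewrite !PoszD !PoszM; ring.
Qed.

End QaryExpansion.

Lemma exists_subv_dim (K : fieldType) (vT : vectType K) (U : {vspace vT}) m :
  m <= \dim U -> exists2 V : {vspace vT}, (V <= U)%VS & \dim V = m.
Proof.
move=> le_mU; exists <<take m (vbasis U)>>%VS.
  by apply/span_subvP => x /mem_take; apply: vbasis_mem.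
have /catl_free free_take : free (take m (vbasis U) ++ drop m (vbasis U)).
  by rewrite cat_take_drop; apply: basis_free (vbasisP U).
by rewrite (eqP free_take) size_take size_tuple; case: ltnP => //; lia.
Qed.

Lemma card_set_sum (T : finType) (P : pred T) : #|[set x | P x]| = \sum_x P x.
Proof.
by rewrite -sum1dep_card big_mkcond; apply: eq_bigr => x _; case: (P x).
Qed.

Section Residual.

Variables (F : finFieldType) (n : nat).
Local Notation q := #|F|.
Let q_gt1 : (1 < q)%N := card_finNzRing_gt1 F.
Local Open Scope ring_scope.
Implicit Types (C D : {vspace 'rV[F]_n}) (c x y : 'rV[F]_n) (S : {set 'I_n}).

Definition supp_word x : {set 'I_n} := [set j | x 0 j != 0].

Definition mindist_geq C d := forall x, x \in C -> x != 0 -> (d <= wt x)%N.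

(* Puncturing on S, realized by zeroing the coordinates in S rather than
   deleting them, so that punctured codes stay in 'rV_n. *)
Definition puncture S : 'Hom('rV[F]_n, 'rV[F]_n) :=
  linfun (mulmxr (diag_mx (\row_j (if j \in S then 0 else 1)))).

Definition residual C c := (puncture (supp_word c) @: C)%VS.

Lemma punctureE S x j : puncture S x 0 j = if j \in S then 0 else x 0 j.
Proof. by rewrite lfunE /= mul_mx_diag !mxE; case: ifP; rewrite ?mulr0 ?mulr1. Qed.

Lemma puncture_supp_word c : puncture (supp_word c) c = 0.
Proof.
by apply/rowP => j; rewrite punctureE inE mxE; case: ifPn => // /negPn/eqP.
Qed.

Lemma suppP D j : reflect (exists2 x, x \in D & x 0 j != 0) (j \in supp D).
Proof.
rewrite inE; apply: (iffP existsP) => [[x /andP[]]|[x xD xj]]; first by exists x.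
by exists x; rewrite xD.
Qed.

Lemma subset_supp D1 D2 : (D1 <= D2)%VS -> supp D1 \subset supp D2.
Proof.
move=> sD12; apply/subsetP => j /suppP[x xD1 xj]; apply/suppP.
by exists x => //; apply: subvP xD1.
Qed.

Lemma supp_word_sub D x : x \in D -> supp_word x \subset supp D.
Proof. by move=> xD; apply/subsetP => j; rewrite inE => xj; apply/suppP; exists x. Qed.

Lemma supp0 : supp (0%VS : {vspace 'rV[F]_n}) = set0.
Proof.
apply/setP => j; rewrite in_set0; apply/negbTE/suppP => -[x].
by rewrite memv0 => /eqP ->; rewrite mxE eqxx.
Qed.

Lemma card_supp_le D : (#|supp D| <= n)%N.
Proof. by rewrite -[X in (_ <= X)%N]card_ord max_card. Qed.

Lemma exists_min_wt C : (0 < \dim C)%N ->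
  exists c, [/\ c \in C, c != 0 & mindist_geq C (wt c)].
Proof.
rewrite lt0n dimv_eq0 -vpick0 => pick_neq0.
have pick_in : (vpick C \in C) && (vpick C != 0) by rewrite memv_pick.
case: (@arg_minnP _ _ (fun x => (x \in C) && (x != 0)) (@wt F n) pick_in).
move=> c /andP[cC c_neq0] min_c.
by exists c; split=> // x xC x_neq0; apply: min_c; rewrite xC.
Qed.

Lemma mem_line_min_wt C c x : c \in C -> mindist_geq C (wt c) ->
  x \in C -> supp_word x \subset supp_word c -> x \in <[c]>%VS.
Proof.
move=> cC min_c xC sub_xc.
have [-> | /rV0Pn[j xj]] := eqVneq x 0; first exact: mem0v.
have cj : c 0 j != 0 by have := subsetP sub_xc j; rewrite !inE; apply.
(* y vanishes at j, so its support is strictly smaller than that of c. *)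
set y := x - (x 0 j / c 0 j) *: c.
suff : y == 0 by rewrite /y subr_eq0 => /eqP ->; rewrite memvZ ?memv_line.
apply: contraT => y_neq0.
have : supp_word y \proper supp_word c.
  apply/properP; split; last by exists j; rewrite !inE // !mxE divfK // subrr eqxx.
  apply/subsetP => i; rewrite !inE !mxE; apply: contraNN => /eqP ci.
  have /implyP := subsetP sub_xc i; rewrite !inE ci eqxx implybF negbK => /eqP ->.
  by rewrite mulr0 subr0.
move=> /proper_card; rewrite ltnNge -[#|supp_word c|]/(wt c) -[#|supp_word y|]/(wt y).
by rewrite min_c // memvB // memvZ.
Qed.

Lemma residual_ker C c : c \in C -> mindist_geq C (wt c) ->
  (C :&: lker (puncture (supp_word c)))%VS = <[c]>%VS.
Proof.
move=> cC min_c; apply/vspaceP => x; rewrite memv_cap memv_ker.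
apply/andP/idP => [[xC /eqP px] | /vlineP[a ->]].
  apply: (mem_line_min_wt cC min_c xC); apply/subsetP => j; rewrite !inE.
  apply: contra_neq => cj.
  by move: (punctureE (supp_word c) x j); rewrite px inE cj eqxx mxE /= => /esym.
by rewrite memvZ // linearZ /= puncture_supp_word scaler0.
Qed.

Lemma dim_residual C c : c \in C -> c != 0 -> mindist_geq C (wt c) ->
  \dim (residual C c) = (\dim C).-1.
Proof.
move=> cC c_neq0 min_c.
by rewrite -(limg_ker_dim (puncture (supp_word c)) C) residual_ker // dim_vline c_neq0.
Qed.

Lemma sum_line_neq0 (a b : F) : (\sum_(l : F) ((a + l * b != 0)%R : nat) =
  if b == 0%R then q * ((a != 0)%R : nat) else q - 1)%N.
Proof.
have [-> | b_neq0] := eqVneq b 0.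
  by under eq_bigr do rewrite mulr0 addr0; rewrite sum_nat_const.
rewrite -card_set_sum (_ : [set l | a + l * b != 0] = [set~ - a / b]).
  by rewrite cardsC1 subn1.
apply/setP => l; rewrite !inE; congr negb; apply/eqP/eqP => [l_root | ->].
  by rewrite -(mulfK b_neq0 l) -(addKr a (l * b)) l_root addr0 mulNr.
by rewrite !mulNr divfK // subrr.
Qed.

Lemma sum_wt_line c x : (\sum_(l : F) wt (x + l *: c)%R =
  (q - 1) * wt c + q * wt (puncture (supp_word c) x))%N.
Proof.
rewrite /wt !card_set_sum big_distrr [X in (_ + X)%N]big_distrr -big_split.
rewrite (eq_bigr (fun l => \sum_j ((x 0 j + l * c 0 j != 0)%R : nat))%N); last first.
  by move=> l _; rewrite card_set_sum; apply: eq_bigr => j _; rewrite !mxE.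
rewrite exchange_big; apply: eq_bigr => j _; rewrite sum_line_neq0 punctureE inE.
by case: eqP => _ /=; rewrite ?eqxx /= ?muln0 ?muln1 ?add0n ?addn0.
Qed.

Lemma mindist_residual C c : c \in C -> mindist_geq C (wt c) ->
  mindist_geq (residual C c) (ceil_div (wt c) q).
Proof.
move=> cC min_c _ /memv_imgP[x xC ->] px_neq0.
have line_wt l : (wt c <= wt (x + l *: c)%R)%N.
  apply: min_c; first by rewrite memvD // memvZ.
  apply: contraNneq px_neq0 => /eqP; rewrite addr_eq0 => /eqP ->.
  by rewrite linearN linearZ /= puncture_supp_word scaler0 oppr0.
have : (\sum_(l : F) wt c <= \sum_(l : F) wt (x + l *: c)%R)%N.
  by apply: leq_sum => l _; apply: line_wt.
rewrite sum_nat_const cardT -cardT sum_wt_line mulnBl mul1n => le_w.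
rewrite leq_ceil_divLR; last exact: ltnW.
rewrite mulnC -(leq_add2l (q * wt c - wt c)) subnK //.
exact: leq_pmull (ltnW q_gt1).
Qed.

Lemma card_supp_residual C c : c \in C ->
  #|supp C| = (wt c + #|supp (residual C c)|)%N.
Proof.
move=> cC; have -> : supp (residual C c) = supp C :\: supp_word c.
  apply/setP => j; rewrite in_setD; apply/suppP/andP.
    case=> _ /memv_imgP[x xC ->]; rewrite punctureE.
    by case: ifP => [_|j_c xj]; [rewrite eqxx | split=> //; apply/suppP; exists x].
  case=> j_c /suppP[x xC xj]; exists (puncture (supp_word c) x); first exact: memv_img.
  by rewrite punctureE (negbTE j_c).
by rewrite -(cardsID (supp_word c) (supp C)) (setIidPr (supp_word_sub cC)).
Qed.

Lemma lift_residual_subv C c (D' : {vspace 'rV[F]_n}) : c \in C -> c != 0 ->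
  (D' <= residual C c)%VS -> exists2 D : {vspace 'rV[F]_n}, (D <= C)%VS &
    \dim D = (\dim D').+1 /\ (#|supp D| <= wt c + #|supp D'|)%N.
Proof.
move=> cC c_neq0 sD'; set p := puncture (supp_word c).
set D1 := (C :&: p @^-1: D')%VS.
have sD'D1 : (D' <= p @: D1)%VS.
  apply/subvP => y yD'; have /memv_imgP[x xC y_def] := subvP sD' y yD'.
  by rewrite y_def in yD' *; apply: memv_img; rewrite memv_cap xC -memv_preim.
have c_ker : (<[c]> <= D1 :&: lker p)%VS.
  by rewrite -memvE !memv_cap cC -memv_preim memv_ker puncture_supp_word mem0v eqxx.
have dim_D1 : ((\dim D').+1 <= \dim D1)%N.
  rewrite -(limg_ker_dim p D1) -add1n leq_add ?dimvS //.
  by apply: leq_trans (dimvS c_ker); rewrite dim_vline c_neq0.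
have [D sDD1 dim_D] := exists_subv_dim dim_D1.
exists D; first exact: subv_trans sDD1 (capvSl _ _).
split=> //; have : supp D1 \subset supp_word c :|: supp D'.
  apply/subsetP => j /suppP[x]; rewrite memv_cap -memv_preim => /andP[_ pxD'] xj.
  rewrite inE; case: (boolP (j \in supp_word c)) => //= j_c; apply/suppP.
  by exists (p x); rewrite // punctureE (negbTE j_c).
move/(subset_trans (subset_supp sDD1))/subset_leq_card.
by move/leq_trans; apply; rewrite cardsU leq_subr.
Qed.

Lemma griesmer_leq_supp k C d : \dim C = k -> mindist_geq C d ->
  (griesmer q k d <= #|supp C|)%N.
Proof.
elim: k C d => [|k IHk] C d dim_C dist_d; first by rewrite /griesmer big_ord0.
have [c [cC c_neq0 min_c]] := exists_min_wt (ltac:(by rewrite dim_C) : 0 < \dim C)%N.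
have dim_res : \dim (residual C c) = k by rewrite dim_residual // dim_C.
have le_res := IHk _ _ dim_res (mindist_residual cC min_c).
apply: leq_trans (_ : griesmer q k.+1 (wt c) <= _)%N.
  by apply: leq_griesmer => //; apply: dist_d.
by rewrite griesmerS // (card_supp_residual cC) leq_add2l.
Qed.

Lemma exists_subv_griesmer r k C d : \dim C = k -> (r <= k)%N -> mindist_geq C d ->
  (#|supp C| <= griesmer q k d)%N -> exists2 D : {vspace 'rV[F]_n},
    (D <= C)%VS & \dim D = r /\ (#|supp D| <= griesmer q r d)%N.
Proof.
elim: r k C d => [|r IHr] k C d dim_C le_rk dist_d supp_C.
  by exists 0%VS; rewrite ?sub0v // dimv0 supp0 cards0.
case: k dim_C le_rk supp_C => // k dim_C le_rk supp_C.
have [c [cC c_neq0 min_c]] := exists_min_wt (ltac:(by rewrite dim_C) : 0 < \dim C)%N.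
have wt_c : wt c = d.
  apply/eqP; rewrite eqn_leq dist_d // andbT leqNgt; apply/negP => lt_dc.
  have := leq_trans (griesmer_leq_supp dim_C min_c) supp_C.
  by rewrite leqNgt ltn_griesmer.
have dim_res : \dim (residual C c) = k by rewrite dim_residual // dim_C.
have dist_res := mindist_residual cC min_c; rewrite wt_c in dist_res.
have supp_res : (#|supp (residual C c)| <= griesmer q k (ceil_div d q))%N.
  by move: supp_C; rewrite (card_supp_residual cC) griesmerS // wt_c leq_add2l.
have [D' sD' [dim_D' supp_D']] := IHr _ _ _ dim_res le_rk dist_res supp_res.
have [D sDC [dim_D supp_D]] := lift_residual_subv cC c_neq0 sD'.
exists D => //; split; first by rewrite dim_D dim_D'.
by apply: leq_trans supp_D _; rewrite griesmerS // wt_c leq_add2l.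
Qed.

Lemma is_ghw_griesmer k r C d : \dim C = k -> (r <= k)%N -> mindist_geq C d ->
  (#|supp C| <= griesmer q k d)%N -> is_ghw C r (griesmer q r d).
Proof.
move=> dim_C le_rk dist_d supp_C.
have lower D : (D <= C)%VS -> \dim D = r -> (griesmer q r d <= #|supp D|)%N.
  move=> sDC dim_D; apply: griesmer_leq_supp dim_D _ => x xD.
  by apply: dist_d; apply: subvP sDC x xD.
split=> //; have [D sDC [dim_D supp_D]] := exists_subv_griesmer dim_C le_rk dist_d supp_C.
by exists D; split=> //; apply/eqP; rewrite eqn_leq supp_D lower.
Qed.

End Residual.

Local Open Scope ring_scope.

Theorem mainTheorem2 (F : finFieldType) (n k d : nat) (C : {vspace 'rV[F]_n})
    (sigma : int) (eps : nat -> nat) :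
  (1 <= k)%N -> (1 <= d)%N ->
  (forall i, (i < k.-1)%N -> (eps i <= #|F| - 1)%N) ->
  d%:Z = sigma * (#|F| ^ (k - 1))%N%:Z
         - \sum_(0 <= i < k.-1) (eps i * #|F| ^ i)%N%:Z ->
  \dim C = k -> is_min_dist C d ->
  n = griesmer #|F| k d ->
  forall r : nat, (1 <= r <= k)%N ->
  exists w : nat,
    [/\ is_ghw C r w,
        w%:Z = (vq #|F| r)%:Z *
                 (sigma * (#|F| ^ (k - r))%N%:Z
                  - \sum_(r <= i < k) (eps i.-1 * #|F| ^ (i - r))%N%:Z)
               - \sum_(1 <= i < r) (eps i.-1 * vq #|F| i)%N%:Z
      & n = griesmer_r #|F| k r w].
Proof.
move=> _ d_gt0 eps_le d_eq dim_C [_ dist_d] n_eq r /andP[r_gt0 le_rk].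
have q_gt1 := card_finNzRing_gt1 F.
exists (griesmer #|F| r d); split.
- apply: is_ghw_griesmer dim_C le_rk dist_d _.
  by rewrite -n_eq card_supp_le.
- exact: griesmer_ceil_quot.
- by rewrite n_eq (griesmer_split q_gt1 r_gt0 le_rk d_gt0).
Qed.
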